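(* Let $R$ be a finite ring with identity, $\alpha\in(0,1)$, and $Q$ a probability distribution on $R$ constant on similarity classes. Let $\pi$ be the (unique) stationary distribution of the Markov chain $(X_t)$ on $R$ defined below. If $a,b\in R$ satisfy $S_a=S_b$, then $\pi(a)=\pi(b)$.
   Context: Similarity classes: $a,b$ are similar if $b=uau^{-1}$ for some unit $u$ of $R$. The Markov chain $(X_t)$ on $R$: at each step an independent coin with Heads probability $\alpha$ is tossed; on Heads, $X_{t+1}=X_t+Y$ with $Y$ uniformly distributed on $R$ (independent); on Tails, $X_{t+1}=Z\cdot X_t$ with $Z$ drawn independently from $Q$ (so the transition matrix is $M_R=\frac{\alpha}{|R|}J+(1-\alpha)B_R$, where $J$ is the all-ones matrix and $B_R(a,b)=\sum_{x\in R,\,xa=b}Q(x)$). For $a\in R$, $I_a=Ra$ is the principal left ideal generated by $a$ and $S_a$ is the set of elements of $I_a$ that generate $I_a$ as a left ideal. *)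

From mathcomp Require Import all_boot all_order all_algebra.
Set Implicit Arguments. Unset Strict Implicit. Unset Printing Implicit Defensive.
Import Order.TTheory GRing.Theory Num.Theory.
Local Open Scope ring_scope.

Definition is_unit_of (T : finPzRingType) (u : T) : Prop :=
  exists v : T, u * v = 1 /\ v * u = 1.

Definition similar (T : finPzRingType) (a b : T) : Prop :=
  exists u v : T, u * v = 1 /\ v * u = 1 /\ b = u * a * v.

Definition is_distribution (T : finPzRingType) (F : realFieldType) (Q : T -> F) : Prop :=
  (forall x, 0 <= Q x) /\ \sum_(x : T) Q x = 1.

Definition class_constant (T : finPzRingType) (F : realFieldType) (Q : T -> F) : Prop :=
  forall a b : T, similar a b -> Q a = Q b.

Definition Bmat (T : finPzRingType) (F : realFieldType) (Q : T -> F) (a b : T) : F :=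
  \sum_(x : T | x * a == b) Q x.

Definition Mmat (T : finPzRingType) (F : realFieldType) (alpha : F) (Q : T -> F) (a b : T) : F :=
  alpha / (#|T|%:R) + (1 - alpha) * Bmat Q a b.

Definition stationary (T : finPzRingType) (F : realFieldType) (alpha : F) (Q pi : T -> F) : Prop :=
  is_distribution pi /\ forall b : T, \sum_(a : T) pi a * Mmat alpha Q a b = pi b.

Definition Ideal (T : finPzRingType) (a : T) : {set T} := [set x * a | x : T].

Definition Sgen (T : finPzRingType) (a : T) : {set T} :=
  [set c in Ideal a | Ideal c == Ideal a].

From mathcomp Require Import all_boot all_order all_algebra.
Import Order.TTheory GRing.Theory Num.Theory.
Local Open Scope ring_scope.

(* If S_a = S_b then R a = R b, so y a = b and x b = a for some x, y.  Some
   power f = (x y)^k is idempotent and fixes a, and p := y f, q := f (x y)^(k-1) x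
   satisfy q p = f, so g := p q is an idempotent with f R ~ g R.  In a principal
   right ideal X the elements killed by right multiplication with an
   idempotent h number |X| / |X h|, and |X f| = |X g|; Moebius inversion over
   the principal right ideals then shows that every Y has as many generators
   killed by f as generators killed by g.  As 1 - g generates (1 - g) R, some
   c with c f = 0 generates (1 - g) R, and p + c is a unit u with u a = b.
   Since Q is constant on similarity classes, B(u c, u d) = B(c, d), so
   d |-> pi(u d) - pi(d) is a fixed point of w |-> (1 - alpha) w B, a strict
   contraction of the l1 norm. *)

Section FiniteRing.
#[local] Set Implicit Arguments.
#[local] Unset Strict Implicit.
Variable T : finPzRingType.

Lemma mul_eq1_sym (u v : T) : u * v = 1 -> v * u = 1.
Proof.
move=> uv.
have vK : injective (fun z : T => v * z).
  by move=> z z' /(congr1 (fun w => u * w)); rewrite !mulrA uv !mul1r.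
have [z vz] : exists z, v * z = 1 by exists (invF vK 1); apply: f_invF.
suff -> : u = z by [].
by rewrite -[u]mulr1 -vz mulrA uv mul1r.
Qed.

Lemma exists_idempotent_expr (e : T) :
  exists2 k, (0 < k)%N & e ^+ k * e ^+ k = e ^+ k.
Proof.
pose E (i : 'I_#|T|.+1) := e ^+ i.
have /injectivePn [i [j nij Eij]] : ~~ injectiveb E.
  by apply/injectiveP => /leq_card; rewrite card_ord ltnn.
have [i0 [d d_gt0 Eperiod]] : exists i0, exists2 d, (0 < d)%N & e ^+ (i0 + d) = e ^+ i0.
  case: (ltngtP i j) nij Eij => [lt_ij|lt_ji|/val_inj->]; rewrite ?eqxx // => _ Eij.
  - by exists i, (j - i)%N; rewrite ?subn_gt0 // subnKC 1?ltnW.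
  - by exists j, (i - j)%N; rewrite ?subn_gt0 // subnKC 1?ltnW.
have Estep m : (i0 <= m)%N -> e ^+ (m + d) = e ^+ m.
  by move=> le_i0m; rewrite -(subnK le_i0m) -addnA exprD Eperiod -exprD.
have Eperiods t m : (i0 <= m)%N -> e ^+ (m + t * d) = e ^+ m.
  move=> le_i0m; elim: t => [|t IHt]; first by rewrite addn0.
  by rewrite mulSnr addnA Estep ?IHt // (leq_trans le_i0m (leq_addr _ _)).
exists (d * i0.+1)%N; first by rewrite muln_gt0 d_gt0.
by rewrite -exprD {2}mulnC Eperiods // (leq_trans (leqnSn i0)) // leq_pmull.
Qed.

Definition rideal (n : T) : {set T} := [set n * r | r : T].

Definition rkilled (h : T) (N : {set T}) : {set T} := [set n in N | n * h == 0].

Definition gens_killed (h : T) (Y : {set T}) : {set T} :=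
  [set n | (n * h == 0) && (rideal n == Y)].

Lemma mem_rideal n : n \in rideal n.
Proof. by apply/imsetP; exists 1; rewrite ?mulr1. Qed.

Lemma mulr_rideal m n r : n \in rideal m -> n * r \in rideal m.
Proof. by case/imsetP=> s _ ->; apply/imsetP; exists (s * r); rewrite ?mulrA. Qed.

Lemma addr_rideal m n n' : n \in rideal m -> n' \in rideal m -> n + n' \in rideal m.
Proof.
by case/imsetP=> r _ -> /imsetP [s _ ->]; apply/imsetP; exists (r + s); rewrite ?mulrDr.
Qed.

Lemma rideal_sub m n : n \in rideal m -> rideal n \subset rideal m.
Proof. by move=> nm; apply/subsetP=> _ /imsetP [r _ ->]; apply: mulr_rideal. Qed.

Lemma card_rkilled_rideal h m :
  #|rkilled h (rideal m)| = (\sum_(Y : {set T} | Y \subset rideal m) #|gens_killed h Y|)%N.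
Proof.
rewrite -sum1_card (partition_big rideal (fun Y => Y \subset rideal m)); last first.
  by move=> n; rewrite inE => /andP [/rideal_sub].
apply: eq_bigr => Y sYm; rewrite -sum1_card; apply: eq_bigl => n; rewrite !inE.
apply/idP/idP => [/andP [/andP [_ ->] ->] // | /andP [-> /eqP nY]].
by rewrite nY eqxx andbT (subsetP sYm) // -nY mem_rideal.
Qed.

Lemma card_rideal_idem (f m : T) : f * f = f ->
  #|rideal m| = (#|[set (n * f)%R | n in rideal m]| * #|rkilled f (rideal m)|)%N.
Proof.
move=> ff; rewrite -cardsX.
rewrite -(card_in_imset (f := fun n => (n * f, n - n * f))); last first.
  by move=> n n' _ _ [e1 e2]; rewrite -(subrK (n * f) n) e2 e1 subrK.
apply: eq_card => -[p q]; rewrite in_setX inE; apply/imsetP/and3P.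
  case=> n nm [-> ->]; split; first by apply/imsetP; exists n.
    by rewrite -{1}[n]mulr1 -mulrBr mulr_rideal.
  by rewrite mulrBl -mulrA ff subrr.
case=> /imsetP [n nm ->] qm /eqP qf; exists (n * f + q).
  by rewrite addr_rideal ?mulr_rideal.
have nqf : (n * f + q) * f = n * f by rewrite mulrDl qf addr0 -mulrA ff.
by rewrite nqf addrC addKr.
Qed.

Section IsomorphicIdempotents.
Variables f p q : T.
Hypotheses (ff : f * f = f) (qp : q * p = f) (fq : f * q = q) (pf : p * f = p).
Let g := p * q.

Lemma idem_pq : g * g = g.
Proof. by rewrite /g mulrA -(mulrA p) qp pf. Qed.

Lemma mul_q_pq : q * g = q.
Proof. by rewrite /g mulrA qp fq. Qed.

Lemma card_rideal_mul_iso m :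
  #|[set n * g | n in rideal m]| = #|[set n * f | n in rideal m]|.
Proof.
have -> : [set n * g | n in rideal m] = [set n * f * q | n in rideal m].
  apply/setP=> z; apply/imsetP/imsetP => -[n nm ->].
    by exists (n * p); rewrite ?mulr_rideal // -mulrA fq -mulrA.
  by exists (n * q); rewrite ?mulr_rideal // -!mulrA mul_q_pq fq.
rewrite (imset_comp (fun z => z * q) (fun n => n * f)) card_in_imset //.
move=> _ _ /imsetP [n _ ->] /imsetP [n' _ ->] /(congr1 (fun z => z * p)).
by rewrite -!(mulrA _ q p) qp -!mulrA ff.
Qed.

Lemma card_rkilled_iso m : #|rkilled f (rideal m)| = #|rkilled g (rideal m)|.
Proof.
have mf_gt0 : (0 < #|[set (n * f)%R | n in rideal m]|)%N.
  by apply/card_gt0P; exists (m * f); apply/imsetP; exists m; rewrite ?mem_rideal.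
apply/eqP; rewrite -(eqn_pmul2l mf_gt0) -card_rideal_idem //.
by rewrite -card_rideal_mul_iso -card_rideal_idem ?idem_pq.
Qed.

Lemma card_gens_killed_iso Y : #|gens_killed f Y| = #|gens_killed g Y|.
Proof.
have [k] := ubnP #|Y|; elim: k Y => // k IHk Y /ltnSE leYk.
have [/existsP [m /eqP mY] | noGen] := boolP [exists m, rideal m == Y]; last first.
  suff gens0 h : gens_killed h Y = set0 by rewrite !gens0.
  apply/setP=> n; rewrite !inE; apply/negP => /andP [_ nY].
  by move/existsP: noGen; apply; exists n.
have := card_rkilled_iso m; rewrite !card_rkilled_rideal mY.
rewrite (bigD1 Y) ?subxx // [X in _ = X -> _](bigD1 Y) ?subxx //=.
rewrite (eq_bigr (fun Z => #|gens_killed g Z|)) => [/addIn // | Z /andP [sZY nZY]].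
by apply/IHk/leq_trans/leYk/proper_card; rewrite properEneq nZY.
Qed.

Lemma unit_of_iso_idem a : f * a = a ->
  exists u v : T, [/\ u * v = 1, v * u = 1 & u * a = p * a].
Proof.
move=> fa.
have : (0 < #|gens_killed g (rideal (1 - g)%R)|)%N.
  apply/card_gt0P; exists (1 - g); rewrite !inE eqxx andbT.
  by rewrite mulrBl mul1r idem_pq subrr.
rewrite -card_gens_killed_iso => /card_gt0P [c]; rewrite !inE => /andP [/eqP cf /eqP cY].
have /imsetP [t _ ct] : 1 - g \in rideal c by rewrite cY mem_rideal.
have cfc : c * (1 - f) = c by rewrite mulrBr mulr1 cf subr0.
have pf0 : p * (1 - f) = 0 by rewrite mulrBr mulr1 pf subrr.
have cq : c * q = 0 by rewrite -fq mulrA cf mul0r.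
have uv : (p + c) * ((1 - f) * t + q) = 1.
  rewrite mulrDl !mulrDr !mulrA pf0 cq cfc -ct mul0r add0r addr0.
  by rewrite addrC subrK.
exists (p + c), ((1 - f) * t + q); split => //; first exact: mul_eq1_sym.
by rewrite mulrDl -{2}fa mulrA cf mul0r addr0.
Qed.

End IsomorphicIdempotents.

Lemma lassociate_unit (a b x y : T) : y * a = b -> x * b = a ->
  exists u v : T, [/\ u * v = 1, v * u = 1 & u * a = b].
Proof.
move=> yab xba; set e := x * y.
have [[//|k] _ idem_ek1] := exists_idempotent_expr e.
set f := e ^+ k.+1 in idem_ek1.
have ea : e * a = a by rewrite /e -mulrA yab xba.
have fa : f * a = a.
  by rewrite /f; elim: k.+1 => [|n IHn]; rewrite ?mul1r // exprSr -mulrA ea.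
have fe : f = e ^+ k * e by rewrite /f exprSr.
have qp : f * e ^+ k * x * (y * f) = f.
  by rewrite -!mulrA (mulrA x y) -/e (mulrA _ e) -fe mulrA idem_ek1.
have fq : f * (f * e ^+ k * x) = f * e ^+ k * x by rewrite !mulrA idem_ek1.
have pf : y * f * f = y * f by rewrite -mulrA idem_ek1.
have [u [v [uv vu ua]]] := unit_of_iso_idem idem_ek1 qp fq pf fa.
by exists u, v; rewrite ua -mulrA fa yab.
Qed.

Lemma mem_Ideal (a : T) : a \in Ideal a.
Proof. by apply/imsetP; exists 1; rewrite ?mul1r. Qed.

Lemma Ideal_eq_unit (a b : T) : Ideal a = Ideal b ->
  exists u v : T, [/\ u * v = 1, v * u = 1 & u * a = b].
Proof.
move=> Iab.
have /imsetP [y _ yab] : b \in Ideal a by rewrite Iab mem_Ideal.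
have /imsetP [x _ xba] : a \in Ideal b by rewrite -Iab mem_Ideal.
exact: lassociate_unit (esym yab) (esym xba).
Qed.

Lemma Sgen_eq_Ideal (a b : T) : Sgen a = Sgen b -> Ideal a = Ideal b.
Proof.
move=> Sab; have : a \in Sgen b by rewrite -Sab inE eqxx mem_Ideal.
by rewrite inE => /andP [_ /eqP].
Qed.

End FiniteRing.

Section Contraction.
#[local] Set Implicit Arguments.
#[local] Unset Strict Implicit.
Variables (I : finType) (F : realFieldType).

Lemma stochastic_contraction_eq0 (B : I -> I -> F) (c : F) (w : I -> F) :
  (forall i j, 0 <= B i j) -> (forall i, \sum_j B i j = 1) -> 0 <= c -> c < 1 ->
  (forall j, w j = c * \sum_i w i * B i j) -> forall j, w j = 0.
Proof.
move=> B_ge0 B_row c_ge0 c_lt1 wE.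
have norm_le : \sum_j `|w j| <= c * \sum_j `|w j|.
  apply: (@le_trans _ _ (\sum_j c * \sum_i `|w i| * B i j)).
    apply: ler_sum => j _; rewrite {1}wE normrM ger0_norm // ler_wpM2l //.
    apply: le_trans (ler_norm_sum _ _ _) _; apply: ler_sum => i _.
    by rewrite normrM (ger0_norm (B_ge0 _ _)).
  rewrite -mulr_sumr exchange_big /=; apply: ler_wpM2l => //.
  by under eq_bigr do rewrite -mulr_sumr B_row mulr1.
have norm0 : \sum_j `|w j| = 0.
  have c1_gt0 : 0 < 1 - c by rewrite subr_gt0.
  apply/eqP; rewrite eq_le sumr_ge0 // andbT -(pmulr_rle0 _ c1_gt0).
  by rewrite mulrBl mul1r subr_le0.
move=> j; apply/eqP; rewrite -normr_eq0.
by rewrite (psumr_eq0P (fun i _ => normr_ge0 (w i)) norm0).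
Qed.

End Contraction.

Section Chain.
#[local] Set Implicit Arguments.
#[local] Unset Strict Implicit.
Variables (T : finPzRingType) (F : realFieldType) (Q : T -> F).

Lemma Bmat_ge0 : (forall x, 0 <= Q x) -> forall c d, 0 <= Bmat Q c d.
Proof. by move=> Q_ge0 c d; apply: sumr_ge0. Qed.

Lemma sum_Bmat c : \sum_d Bmat Q c d = \sum_x Q x.
Proof.
rewrite /Bmat (exchange_big_dep xpredT) //=; apply: eq_bigr => x _.
by rewrite (big_pred1 (x * c)) // => d; rewrite eq_sym.
Qed.

Lemma Bmat_mul_unit (u v : T) : class_constant Q -> u * v = 1 -> v * u = 1 ->
  forall c d, Bmat Q (u * c) (u * d) = Bmat Q c d.
Proof.
move=> Qsim uv vu c d.
have conjK : injective (fun x => u * x * v).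
  move=> x y /(congr1 (fun z => v * z * u)).
  by rewrite !mulrA vu !mul1r -!mulrA vu !mulr1.
rewrite /Bmat (reindex_inj conjK) /=; apply: eq_big => [x | x _].
  rewrite -mulrA (mulrA v) vu mul1r -mulrA; apply/eqP/eqP => [|-> //].
  by move/(congr1 (fun z => v * z)); rewrite !mulrA vu !mul1r.
by symmetry; apply: Qsim; exists u, v.
Qed.

Lemma stationaryE (alpha : F) (pi : T -> F) : stationary alpha Q pi ->
  forall d, pi d = alpha / #|T|%:R + (1 - alpha) * \sum_c pi c * Bmat Q c d.
Proof.
move=> [[_ pi1] pi_st] d; rewrite -pi_st /Mmat.
under eq_bigr do rewrite mulrDr.
rewrite big_split /= -mulr_suml pi1 mul1r mulr_sumr; congr (_ + _).
by apply: eq_bigr => c _; rewrite mulrCA.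
Qed.

Lemma stationary_mul_unit (alpha : F) (pi : T -> F) (u v : T) :
  0 < alpha -> alpha < 1 -> is_distribution Q -> class_constant Q ->
  stationary alpha Q pi -> u * v = 1 -> v * u = 1 -> forall d, pi (u * d) = pi d.
Proof.
move=> alpha_gt0 alpha_lt1 [Q_ge0 Q1] Qsim pi_st uv vu d; apply/subr0_eq; move: d.
have uK : injective (fun c : T => u * c).
  by move=> x y /(congr1 (fun z => v * z)); rewrite !mulrA vu !mul1r.
apply: (stochastic_contraction_eq0 (c := 1 - alpha) (Bmat_ge0 Q_ge0)) => [c | | | d].
- by rewrite sum_Bmat Q1.
- by rewrite subr_ge0 ltW.
- by rewrite ltrBlDr ltrDl.
rewrite !(stationaryE pi_st) (reindex_inj uK) /=.
under [in RHS]eq_bigr do rewrite mulrBl.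
rewrite opprD addrACA subrr add0r -mulrBr -sumrB; congr (_ * _).
by apply: eq_bigr => c _; rewrite (Bmat_mul_unit Qsim uv vu).
Qed.

End Chain.

Theorem proposition3p1 (T : finPzRingType) (F : realFieldType) (alpha : F)
  (Q pi : T -> F) :
  0 < alpha -> alpha < 1 ->
  is_distribution Q -> class_constant Q ->
  stationary alpha Q pi ->
  forall a b : T, Sgen a = Sgen b -> pi a = pi b.
Proof.
move=> alpha_gt0 alpha_lt1 Qdist Qsim pi_st a b /Sgen_eq_Ideal/Ideal_eq_unit.
case=> u [v [uv vu <-]].
by rewrite (stationary_mul_unit alpha_gt0 alpha_lt1 Qdist Qsim pi_st uv vu).
Qed.
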